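(* Let $K$ be a field of characteristic zero, $L_n=K[x_1^{\pm1},\ldots,x_n^{\pm1}]$, $W_n=\mathrm{Der}_K(L_n)$ and $\sigma\in\mathrm{Aut}_{\mathrm{Lie}}(W_n)$. Then there is $A\in\mathrm{GL}_n(\mathbb{Z})$ with $\sigma(H)=AH$, and $\sigma_A\sigma$ fixes each of $H_1,\ldots,H_n$, where $\sigma_A\in\mathrm{Aut}_{K\text{-alg}}(L_n)$, $\sigma_A(x_i)=\prod_jx_j^{a_{ji}}$, acts on $W_n$ by $\delta\mapsto\sigma_A\delta\sigma_A^{-1}$.
   Context: $H_i=x_i\partial_i$, $H=(H_1,\ldots,H_n)^T$, and $\sigma(H)=AH$ means $\sigma(H_i)=\sum_ja_{ij}H_j$ for all $i$, where $A=(a_{ij})$. *)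

From HB Require Import structures.
From mathcomp Require Import all_boot all_algebra.
From mathcomp Require Import freeg.
From mathcomp Require Import ring.

Set Implicit Arguments.
Unset Strict Implicit.
Unset Printing Implicit Defensive.

Import GRing.Theory.
Local Open Scope ring_scope.

Section Laurent.
Variables (K : fieldType) (n : nat).

Definition expo := 'cV[int]_n.
Definition laurent := {freeg expo / K}.

Definition lmul (p q : laurent) : laurent :=
  \sum_(k <- dom p) \sum_(l <- dom q) << (coeff k p * coeff l q) *g (k + l) >>.

Definition is_derivation (D : laurent -> laurent) :=
  (forall (a : K) (u v : laurent), D (a *: u + v) = a *: D u + D v) /\
  (forall u v : laurent, D (lmul u v) = lmul (D u) v + lmul u (D v)).

Definition Hop (i : 'I_n) (p : laurent) : laurent :=
  \sum_(m <- dom p) << (coeff m p * (m i ord0)%:~R) *g m >>.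

Lemma sum_delta (s : seq expo) (f : expo -> K) x : uniq s ->
  \sum_(m <- s) f m * (m == x)%:R = (x \in s)%:R * f x.
Proof.
move=> us; case: (boolP (x \in s)) => xs.
  rewrite (bigD1_seq x) //= eqxx mulr1 big1 ?addr0 ?mul1r // => m /negPf ->.
  by rewrite mulr0.
rewrite mul0r big_seq big1 // => m ms; case: eqP => [e|_]; last by rewrite mulr0.
by rewrite -e ms in xs.
Qed.

Lemma coeff_Hop i p x : coeff x (Hop i p) = coeff x p * (x i ord0)%:~R.
Proof.
rewrite /Hop raddf_sum /=.
under eq_bigr do rewrite coeffU.
rewrite (sum_delta (fun m => coeff m p * (m i ord0)%:~R)) ?uniq_dom //.
case: (boolP (x \in dom p)) => xd; first by rewrite mul1r.
by rewrite mul0r coeff_outdom // mul0r.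
Qed.

Lemma coeff_lmul p q x : coeff x (lmul p q) =
  \sum_(k <- dom p) \sum_(l <- dom q) coeff k p * coeff l q * (k + l == x)%:R.
Proof.
rewrite /lmul raddf_sum /=; apply: eq_bigr => k _.
by rewrite raddf_sum /=; apply: eq_bigr => l _; rewrite coeffU.
Qed.

Lemma sum_dom_ext (p : laurent) (s : seq expo) (F : expo -> K) :
  uniq s -> {subset dom p <= s} -> (forall k, k \notin dom p -> F k = 0) ->
  \sum_(k <- dom p) F k = \sum_(k <- s) F k.
Proof.
move=> us sub F0.
rewrite [RHS](bigID (fun k => k \in dom p)) /= [X in _ + X]big1 ?addr0;
  last by move=> k /F0.
rewrite -[RHS]big_filter; apply: perm_big.
apply: uniq_perm; [exact: uniq_dom | exact: filter_uniq |].
move=> k; rewrite mem_filter; case: (boolP (k \in dom p)) => //= kd.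
by rewrite sub.
Qed.

Lemma dom_Hop_sub i p : {subset dom (Hop i p) <= dom p}.
Proof.
move=> k; rewrite !mem_dom coeff_Hop; apply: contra => /eqP ->.
by rewrite mul0r.
Qed.

Lemma Hop_der i : is_derivation (Hop i).
Proof.
split.
  move=> a u v; apply/eqP/freeg_eqP => x.
  by rewrite coeffD coeffZ !coeff_Hop coeffD coeffZ; ring.
move=> u v; apply/eqP/freeg_eqP => x.
rewrite coeffD coeff_Hop !coeff_lmul.
rewrite (sum_dom_ext (p := Hop i u) (s := dom u)) ?uniq_dom //; last 2 first.
- exact: dom_Hop_sub.
- move=> k; rewrite mem_dom negbK => /eqP ->.
  by rewrite big1 // => l _; rewrite !mul0r.
under [X in _ = _ + X]eq_bigr => k _.
  rewrite (sum_dom_ext (p := Hop i v) (s := dom v)) ?uniq_dom //; last 2 first.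
  - exact: dom_Hop_sub.
  - move=> l; rewrite mem_dom negbK => /eqP ->.
    by rewrite mulr0 !mul0r.
  over.
rewrite -big_split /= big_distrl /=; apply: eq_bigr => k _.
rewrite -big_split /= big_distrl /=; apply: eq_bigr => l _.
rewrite !coeff_Hop; case: eqP => [<-|_]; last by rewrite !mulr0 mul0r addr0.
rewrite mxE intrD; ring.
Qed.

Definition Wn := {D : laurent -> laurent | is_derivation D}.

Definition Hw (i : 'I_n) : Wn := exist _ (Hop i) (Hop_der i).

(* Linear
   combinations and brackets are stated relationally on the underlying maps. *)
Definition is_Lie_aut (sigma : Wn -> Wn) :=
  [/\ bijective sigma,
   (forall (a : K) (D E F : Wn),
      (forall p, sval F p = a *: sval D p + sval E p) ->
      forall p, sval (sigma F) p = a *: sval (sigma D) p + sval (sigma E) p) &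
   (forall D E F : Wn,
      (forall p, sval F p = sval D (sval E p) - sval E (sval D p)) ->
      forall p, sval (sigma F) p =
        sval (sigma D) (sval (sigma E) p) - sval (sigma E) (sval (sigma D) p))].

(* sigma_A : the K-algebra automorphism of L_n with x_i |-> prod_j x_j^(a_ji),
   i.e. x^m |-> x^(A m) on monomials, extended K-linearly. *)
Definition sigmaA (A : 'M[int]_n) (p : laurent) : laurent :=
  \sum_(m <- dom p) << coeff m p *g (A *m m) >>.

Definition conjA (A : 'M[int]_n) (d : laurent -> laurent) (p : laurent) :
  laurent := sigmaA A (d (sigmaA (invmx A) p)).

End Laurent.

(* A derivation D of L_n is determined by the values D(x_l), and the coefficient
   of x^x in D(x^k) depends only on the shift c = x - k, linearly in k: D is a
   finite sum of homogeneous derivations x^c (w . H).  Since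
   [H_i, x^c (w . H)] = c_i x^c (w . H), ad H_i is locally finite on W_n, hence
   so is ad sigma(H_i).  A derivation g with locally finite adjoint has no
   homogeneous component of nonzero degree: for a weight making such a degree M
   maximal and positive, the iterates (ad g)^j y of a suitable x^b (u . H) have
   nonzero leading terms of strictly increasing weighted degree, which no monic
   polynomial in ad g can cancel.  Thus sigma(H_i) = sum_l B_il H_l.  The image
   under sigma of the common eigenvector x_j H_j of the ad H_i yields an integer
   vector c with B c = e_j; doing the same for sigma^-1 shows, in characteristic
   0, that B is an integer matrix A with integer inverse, and conjugation by
   sigma_A turns sum_j a_ij H_j back into H_i. *)

From HB Require Import structures.
From mathcomp Require Import all_boot all_order all_algebra.
From mathcomp Require Import freeg ring zify.
From Stdlib Require Import FunctionalExtensionality ProofIrrelevance Classical.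

Set Implicit Arguments.
Unset Strict Implicit.
Unset Printing Implicit Defensive.

Import Order.TTheory GRing.Theory Num.Theory.
Local Open Scope ring_scope.

Ltac expo_eq := apply/matrixP => ? ?; rewrite !mxE; ring.

Lemma eq_subl_addr (V : zmodType) (x y z : V) : (z == x - y) = (y + z == x).
Proof. by rewrite eq_sym subr_eq addrC eq_sym. Qed.

Lemma eq_subr_addr (V : zmodType) (x y z : V) : (z == x - y) = (z + y == x).
Proof. by rewrite eq_sym subr_eq eq_sym. Qed.

Lemma sum_neq0_exists (R : nmodType) (I : eqType) (s : seq I) (F : I -> R) :
  \sum_(i <- s) F i != 0 -> exists2 i, i \in s & F i != 0.
Proof.
move=> ns; apply/hasP; apply/negPn/negP => /hasPn F0; move: ns.
by rewrite big1_seq ?eqxx // => i /F0; rewrite negbK => /eqP.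
Qed.

Section LinearMaps.
Variables (R : pzRingType) (V : lmodType R) (f : V -> V).
Hypothesis lf : linear f.

Lemma linear_fun0 : f 0 = 0.
Proof.
have := lf 1 0 0; rewrite !scale1r addr0 => /eqP.
by rewrite eq_sym -subr_eq0 addrK => /eqP.
Qed.

Lemma linear_funD u v : f (u + v) = f u + f v.
Proof. by rewrite -{1}[u]scale1r lf scale1r. Qed.

Lemma linear_funZ a u : f (a *: u) = a *: f u.
Proof. by rewrite -[a *: u]addr0 lf linear_fun0 addr0. Qed.

Lemma linear_funB u v : f (u - v) = f u - f v.
Proof. by rewrite -scaleN1r linear_funD linear_funZ scaleN1r. Qed.

Lemma linear_fun_sum (I : Type) (s : seq I) (F : I -> V) :
  f (\sum_(i <- s) F i) = \sum_(i <- s) f (F i).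
Proof.
elim: s => [|a s IH]; first by rewrite !big_nil linear_fun0.
by rewrite !big_cons linear_funD IH.
Qed.

End LinearMaps.

Lemma linear_fun_sub (R : pzRingType) (V : lmodType R) (f h : V -> V) :
  linear f -> linear h -> linear (fun p => f p - h p).
Proof. by move=> lf lh a u v; rewrite lf lh scalerBr opprD addrACA. Qed.

Lemma linear_fun_sum_scale (R : comPzRingType) (V : lmodType R) (I : Type)
    (s : seq I) (c : I -> R) (F : I -> V -> V) :
  (forall i, linear (F i)) -> linear (fun p => \sum_(i <- s) c i *: F i p).
Proof.
move=> lF a u v; rewrite scaler_sumr -big_split /=; apply: eq_bigr => i _.
by rewrite lF scalerDr !scalerA mulrC.
Qed.

Section LaurentPolynomials.
Variables (K : fieldType) (n : nat).
Local Notation L := (laurent K n).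
Local Notation expo := (expo n).

Definition mono (m : expo) : L := << m >>.

Definition unit_expo (i : 'I_n) : expo := delta_mx i ord0.

Lemma coeff_mono m x : coeff x (mono m) = (m == x)%:R.
Proof. by rewrite coeffU mul1r. Qed.

Lemma freegU_mono (c : K) m : << c *g m >> = c *: mono m :> L.
Proof. by apply/eqP/freeg_eqP => x; rewrite coeffZ coeff_mono coeffU. Qed.

Lemma sum_dom_coeff (q : L) (F : expo -> K) y :
  \sum_(l <- dom q) coeff l q * F l * (l == y)%:R = coeff y q * F y.
Proof.
rewrite (sum_delta (fun l => coeff l q * F l)) ?uniq_dom //.
case: (boolP (y \in dom q)) => yd; first by rewrite mul1r.
by rewrite mul0r coeff_outdom // mul0r.
Qed.

Lemma sum_dom_coeff1 (q : L) y :
  \sum_(l <- dom q) coeff l q * (l == y)%:R = coeff y q.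
Proof.
by under eq_bigr do rewrite -[coeff _ q]mulr1; rewrite sum_dom_coeff mulr1.
Qed.

Lemma coeff_linear (f : L -> L) (p : L) x : linear f ->
  coeff x (f p) = \sum_(m <- dom p) coeff m p * coeff x (f (mono m)).
Proof.
move=> lf; rewrite -{1}(freeg_sumE p) linear_fun_sum // raddf_sum /=.
by apply: eq_bigr => m _; rewrite freegU_mono linear_funZ // coeffZ.
Qed.

Lemma linear_mono_ext (f h : L -> L) : linear f -> linear h ->
  (forall m, f (mono m) = h (mono m)) -> f =1 h.
Proof.
move=> lf lh e p; apply/eqP/freeg_eqP => x.
by rewrite !coeff_linear //; apply: eq_bigr => m _; rewrite e.
Qed.

Lemma coeff_lmulr (p q : L) x :
  coeff x (lmul p q) = \sum_(k <- dom p) coeff k p * coeff (x - k) q.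
Proof.
rewrite coeff_lmul; apply: eq_bigr => k _.
under eq_bigr => l _ do rewrite -mulrA -eq_subl_addr.
by rewrite -big_distrr sum_dom_coeff1.
Qed.

Lemma coeff_lmull (p q : L) x :
  coeff x (lmul p q) = \sum_(l <- dom q) coeff (x - l) p * coeff l q.
Proof.
rewrite coeff_lmul exchange_big /=; apply: eq_bigr => l _.
under eq_bigr => k _ do rewrite mulrAC -eq_subr_addr.
by rewrite -big_distrl sum_dom_coeff1.
Qed.

Lemma coeff_lmul_monol a (q : L) x : coeff x (lmul (mono a) q) = coeff (x - a) q.
Proof. by rewrite coeff_lmulr /mono domU1 big_seq1 coeff_mono eqxx mul1r. Qed.

Lemma coeff_lmul_monor a (q : L) x : coeff x (lmul q (mono a)) = coeff (x - a) q.
Proof. by rewrite coeff_lmull /mono domU1 big_seq1 coeff_mono eqxx mulr1. Qed.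

Lemma lmul_mono a b : lmul (mono a) (mono b) = mono (a + b).
Proof.
by apply/eqP/freeg_eqP => x; rewrite coeff_lmul_monol !coeff_mono eq_subl_addr.
Qed.

Lemma lmul_mono0l (q : L) : lmul (mono 0) q = q.
Proof. by apply/eqP/freeg_eqP => x; rewrite coeff_lmul_monol subr0. Qed.

Lemma lmul_mono0r (q : L) : lmul q (mono 0) = q.
Proof. by apply/eqP/freeg_eqP => x; rewrite coeff_lmul_monor subr0. Qed.

Lemma lmul_linearl (w : L) : linear (fun u : L => lmul u w).
Proof.
move=> a u v; apply/eqP/freeg_eqP => x.
rewrite coeffD coeffZ !coeff_lmull mulr_sumr -big_split /=.
by apply: eq_bigr => l _; rewrite coeffD coeffZ; ring.
Qed.

Lemma lmul_linearr (w : L) : linear (lmul w).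
Proof.
move=> a u v; apply/eqP/freeg_eqP => x.
rewrite coeffD coeffZ !coeff_lmulr mulr_sumr -big_split /=.
by apply: eq_bigr => l _; rewrite coeffD coeffZ; ring.
Qed.

Lemma derivation_linear (D : L -> L) : is_derivation D -> linear D.
Proof. by case. Qed.

Lemma derivation_mono0 (D : L -> L) : is_derivation D -> D (mono 0) = 0.
Proof.
move=> [_ dD]; have := dD (mono 0) (mono 0).
rewrite lmul_mono addr0 lmul_mono0l lmul_mono0r => /eqP.
by rewrite eq_sym -subr_eq0 addrK => /eqP.
Qed.

Lemma unit_expo_entry (j i : 'I_n) : unit_expo j i ord0 = (i == j)%:R.
Proof. by rewrite mxE eqxx andbT. Qed.

Lemma sum_unit_expo (j : 'I_n) (f : 'I_n -> K) :
  \sum_i (unit_expo j i ord0)%:~R * f i = f j.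
Proof.
rewrite (bigD1 j) //= big1 ?addr0; first by rewrite unit_expo_entry eqxx mul1r.
by move=> i /negPf ni; rewrite unit_expo_entry ni mul0r.
Qed.

Lemma expo_unit_decomp (k : expo) : k = \sum_i unit_expo i *~ k i ord0.
Proof.
apply/matrixP => i z; rewrite (ord1 z) summxE (bigD1 i) //= big1 ?addr0.
  by rewrite -scaler_int intz !mxE eqxx mulr1.
by move=> j ji; rewrite -scaler_int intz !mxE eq_sym (negPf ji) mulr0.
Qed.

Lemma unit_expo_invariant (T : Type) (G : expo -> T) :
  (forall k j, G (k + unit_expo j) = G k) -> forall k, G k = G 0.
Proof.
move=> GI.
have GIn k j (m : nat) : G (k + unit_expo j *+ m) = G k.
  by elim: m => [|m IH]; rewrite ?mulr0n ?addr0 // mulrSr addrA GI.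
have GIz k j (z : int) : G (k + unit_expo j *~ z) = G k.
  case: z => m; first by rewrite -pmulrn GIn.
  by rewrite NegzE mulrNz -pmulrn -{2}[k](subrK (unit_expo j *+ m.+1)) GIn.
move=> k; rewrite [k]expo_unit_decomp.
elim: (index_enum _) => [|j s IH]; first by rewrite big_nil.
by rewrite big_cons addrC GIz.
Qed.

Lemma coeff_derivation_mono (D : L -> L) k x : is_derivation D ->
  coeff x (D (mono k)) =
  \sum_i (k i ord0)%:~R * coeff (unit_expo i + (x - k)) (D (mono (unit_expo i))).
Proof.
move=> dD; set c := x - k.
pose F k' := coeff (k' + c) (D (mono k')).
pose G k' := F k' - \sum_i (k' i ord0)%:~R * F (unit_expo i).
have FD k' j : F (k' + unit_expo j) = F k' + F (unit_expo j).
  rewrite /F -lmul_mono dD.2 coeffD coeff_lmul_monor coeff_lmul_monol.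
  have -> : k' + unit_expo j + c - unit_expo j = k' + c by expo_eq.
  by have -> : k' + unit_expo j + c - k' = unit_expo j + c by expo_eq.
have GI k' j : G (k' + unit_expo j) = G k'.
  rewrite /G FD; under eq_bigr => i _ do rewrite mxE intrD mulrDl.
  rewrite big_split /= sum_unit_expo; ring.
have G0 : G 0 = 0.
  rewrite /G /F derivation_mono0 // coeff0 big1 ?subrr // => i _.
  by rewrite mxE mul0r.
have := unit_expo_invariant GI k; rewrite G0 /G /F => /eqP.
by rewrite subr_eq0 (_ : k + c = x) => [/eqP|]; last expo_eq.
Qed.
End LaurentPolynomials.

Section HomogeneousDerivations.
Variables (K : fieldType) (n : nat).
Local Notation L := (laurent K n).
Local Notation expo := (expo n).
Local Notation mono := (@mono K n).
Local Notation Hop := (@Hop K n).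

Definition ad (g f : L -> L) : L -> L := fun p => g (f p) - f (g p).

Lemma ad_linear g f : linear g -> linear f -> linear (ad g f).
Proof.
by move=> lg lf a u v; rewrite /ad lf lg lg lf scalerBr addrACA opprD.
Qed.

Lemma iter_ad_linear g f j : linear g -> linear f -> linear (iter j (ad g) f).
Proof. by move=> lg lf; elim: j => [|j IH] //=; exact: ad_linear. Qed.

Definition dot (w : 'I_n -> K) (m : expo) : K := \sum_i w i * (m i ord0)%:~R.

Lemma dotD w a b : dot w (a + b) = dot w a + dot w b.
Proof.
by rewrite /dot -big_split; apply: eq_bigr => i _; rewrite mxE intrD mulrDr.
Qed.

Lemma dotMn w m j : dot w (m *+ j) = j%:R * dot w m.
Proof.
elim: j => [|j IH]; last by rewrite mulrS dotD IH mulrS mulrDl mul1r.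
by rewrite mulr0n mul0r /dot big1 // => i _; rewrite mxE mulr0.
Qed.

Lemma dotZl a w m : dot (fun i => a * w i) m = a * dot w m.
Proof. by rewrite /dot mulr_sumr; apply: eq_bigr => i _; rewrite mulrA. Qed.

Lemma dot_unit_expo w l : dot w (unit_expo l) = w l.
Proof. by rewrite /dot; under eq_bigr do rewrite mulrC; rewrite sum_unit_expo. Qed.

(* [homder c w] is the derivation x^c (w_1 H_1 + ... + w_n H_n). *)
Definition homder (c : expo) (w : 'I_n -> K) (p : L) : L :=
  \sum_(m <- dom p) << coeff m p * dot w m *g (m + c) >>.

Lemma coeff_homder c w p x :
  coeff x (homder c w p) = coeff (x - c) p * dot w (x - c).
Proof.
rewrite raddf_sum /=; under eq_bigr => m _ do rewrite coeffU -eq_subr_addr.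
exact: sum_dom_coeff.
Qed.

Lemma coeff_homder_mono c w k x :
  coeff x (homder c w (mono k)) = dot w k * (k + c == x)%:R.
Proof.
rewrite coeff_homder coeff_mono eq_subr_addr.
by case: eqP => [<-|_]; rewrite ?addrK ?mul1r ?mulr1 ?mul0r ?mulr0.
Qed.

Lemma homder_ext c w w' : w =1 w' -> homder c w =1 homder c w'.
Proof.
move=> e p; apply/eqP/freeg_eqP => x; rewrite !coeff_homder; congr (_ * _).
by apply: eq_bigr => i _; rewrite e.
Qed.

Lemma homder_linear c w : linear (homder c w).
Proof.
move=> a u v; apply/eqP/freeg_eqP => x.
by rewrite coeffD coeffZ !coeff_homder coeffD coeffZ; ring.
Qed.

Lemma homder_derivation c w : is_derivation (homder c w).
Proof.
split; first exact: homder_linear.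
move=> u v; apply/eqP/freeg_eqP => x.
have E1 k l : (l == x - k - c) = (k + l == x - c).
  by rewrite addrAC eq_subl_addr.
have E2 k l : (k == x - l - c) = (k + l == x - c).
  by rewrite addrAC eq_subr_addr.
rewrite coeffD coeff_homder [coeff (x - c) _]coeff_lmulr.
rewrite [coeff x (lmul (homder c w u) v)]coeff_lmull [coeff x (lmul u _)]coeff_lmulr.
under eq_bigr => k _ do rewrite -[x - c - k]addrAC -(sum_dom_coeff1 v) mulr_sumr.
under [X in _ = X + _]eq_bigr => l _ do
  rewrite coeff_homder -(sum_dom_coeff u (dot w)) mulr_suml.
under [X in _ = _ + X]eq_bigr => k _ do
  rewrite coeff_homder -(sum_dom_coeff v (dot w)) mulr_sumr.
rewrite big_distrl [X in _ = X + _]exchange_big -big_split /=.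
apply: eq_bigr => k _; rewrite big_distrl -big_split /=; apply: eq_bigr => l _.
rewrite E1 E2; case: eqP => [e|_]; last by rewrite !(mulr0, mul0r, addr0).
by rewrite -e dotD; ring.
Qed.

Lemma ad_homder M u c v :
  ad (homder M u) (homder c v) =1
  homder (M + c) (fun i => dot u c * v i - dot v M * u i).
Proof.
move=> p; apply/eqP/freeg_eqP => x; rewrite /ad coeffB !coeff_homder.
have -> : x - M - c = x - (M + c) by expo_eq.
have -> : x - c - M = x - (M + c) by expo_eq.
have -> : x - M = x - (M + c) + c by expo_eq.
have -> : x - c = x - (M + c) + M by expo_eq.
move: (x - (M + c)) => z; rewrite !dotD.
have -> : dot (fun i => dot u c * v i - dot v M * u i) z =
          dot u c * dot v z - dot v M * dot u z.
  by rewrite !mulr_sumr -sumrB; apply: eq_bigr => i _; ring.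
ring.
Qed.

Lemma Hop_mono i k : Hop i (mono k) = (k i ord0)%:~R *: mono k.
Proof.
apply/eqP/freeg_eqP => x; rewrite coeff_Hop coeffZ !coeff_mono.
by case: eqP => [->|_]; rewrite ?mulr1 ?mul1r ?mulr0 ?mul0r.
Qed.

Lemma Hop_linear i : linear (Hop i).
Proof. exact: (Hop_der K i).1. Qed.

Lemma ad_Hop_homder i c w : ad (Hop i) (homder c w) =1
  (fun p => (c i ord0)%:~R *: homder c w p).
Proof.
move=> p; apply/eqP/freeg_eqP => x.
rewrite /ad coeffB coeffZ coeff_Hop !coeff_homder coeff_Hop !mxE intrD intrN.
ring.
Qed.

Lemma coeff_iter_ad_Hop i f j k x : linear f ->
  coeff x (iter j (ad (Hop i)) f (mono k)) =
  ((x - k) i ord0)%:~R ^+ j * coeff x (f (mono k)).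
Proof.
move=> lf; elim: j => [|j IH] /=; first by rewrite expr0 mul1r.
rewrite /ad coeffB coeff_Hop Hop_mono linear_funZ; last first.
  exact/iter_ad_linear/lf/Hop_linear.
by rewrite coeffZ IH !mxE intrB exprS; ring.
Qed.

Definition poly_ad (P : {poly K}) (g f : L -> L) (p : L) : L :=
  \sum_(j < size P) P`_j *: iter j (ad g) f p.

Lemma poly_ad_linear P g f : linear g -> linear f -> linear (poly_ad P g f).
Proof. by move=> lg lf; apply: linear_fun_sum_scale => j; exact: iter_ad_linear. Qed.

Definition der_shifts (D : L -> L) : seq expo :=
  flatten [seq [seq m - unit_expo l | m <- dom (D (mono (unit_expo l)))]
          | l <- enum 'I_n].

Lemma der_shiftsP D k x : is_derivation D -> coeff x (D (mono k)) != 0 ->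
  x - k \in der_shifts D.
Proof.
move=> dD; rewrite coeff_derivation_mono // => /sum_neq0_exists [l _].
rewrite mulf_eq0 negb_or => /andP [_ h]; apply/flattenP.
exists [seq m - unit_expo l | m <- dom (D (mono (unit_expo l)))].
  by apply/mapP; exists l; rewrite ?mem_enum.
by apply/mapP; exists (unit_expo l + (x - k)); rewrite ?mem_dom //; expo_eq.
Qed.

Lemma ad_Hop_locally_finite i D : is_derivation D ->
  exists2 P : {poly K}, P \is monic & poly_ad P (Hop i) D =1 (fun=> 0).
Proof.
move=> dD; have lD := derivation_linear dD.
set s := [seq ((c : expo) i ord0)%:~R : K | c <- der_shifts D].
exists (\prod_(a <- s) ('X - a%:P)); first exact: monic_prod_XsubC.
apply: linear_mono_ext; first exact/poly_ad_linear/lD/Hop_linear.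
  by move=> a u v; rewrite scaler0 addr0.
move=> k; apply/eqP/freeg_eqP => x; rewrite coeff0 raddf_sum /=.
under eq_bigr => j _ do rewrite coeffZ coeff_iter_ad_Hop // mulrA.
rewrite -big_distrl /= -horner_coef.
have [->|nz] := eqVneq (coeff x (D (mono k))) 0; first by rewrite mulr0.
have /rootP -> : root (\prod_(a <- s) ('X - a%:P)) ((x - k) i ord0)%:~R.
  by rewrite root_prod_XsubC; apply/mapP; exists (x - k) => //; exact: der_shiftsP.
by rewrite mul0r.
Qed.

End HomogeneousDerivations.

Lemma base_digits_eq0 (N : int) (m : nat) (d : 'I_m -> int) :
  (forall i, `|d i| < N) -> \sum_(i < m) N ^+ i * d i = 0 -> forall i, d i = 0.
Proof.
elim: m d => [|m IH] d bd sz i; first by case: i.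
have N0 : 0 < N by apply: le_lt_trans (bd ord0); exact: normr_ge0.
rewrite big_ord_recl expr0 mul1r in sz.
set t := \sum_(j < m) N ^+ j * d (fintype.lift ord0 j).
have d0 : d ord0 = - (N * t).
  apply/eqP; rewrite -addr_eq0 -{}[X in _ == X]sz mulr_sumr.
  by apply/eqP; congr (_ + _); apply: eq_bigr => j _; rewrite exprS mulrA.
have t0 : t = 0.
  apply/eqP; apply/negP => nt; have := bd ord0; rewrite d0 normrN normrM.
  have : 0 < `|t| by rewrite normr_gt0; exact/negP.
  rewrite gtr0_norm //; nia.
case: (unliftP ord0 i) => [j ->|->]; last by rewrite d0 t0 mulr0 oppr0.
exact: (IH (fun j => d (fintype.lift ord0 j))).
Qed.

Lemma seq_argmax_inj (T : eqType) (f : T -> int) (S : seq T) : S != [::] ->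
  {in S &, injective f} ->
  exists2 M, M \in S & forall c, c \in S -> c != M -> f c < f M.
Proof.
elim: S => [|a s IH] // _ inj.
have [-> | ns] := eqVneq s [::].
  by exists a; rewrite ?inE // => c; rewrite inE => ->.
have [|M Ms HM] := IH ns.
  by move=> x y xs ys; apply: inj; rewrite inE ?xs ?ys orbT.
have Ms' : M \in a :: s by rewrite inE Ms orbT.
have [lt_Ma|le_aM] := ltP (f M) (f a).
  exists a => [|c]; first by rewrite inE eqxx.
  rewrite inE => /orP [/eqP -> | cs]; first by rewrite eqxx.
  move=> ca; have [-> //|cM] := eqVneq c M.
  exact: lt_trans (HM c cs cM) lt_Ma.
exists M => // c; rewrite inE => /orP [/eqP -> | cs] cM; last exact: HM.
rewrite lt_neqAle le_aM andbT; apply: contra cM => /eqP faM.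
by rewrite (inj a M) ?inE ?eqxx.
Qed.

Section WeightedDegree.
Variables (K : fieldType) (n : nat).
Local Notation L := (laurent K n).
Local Notation expo := (expo n).
Local Notation mono := (@mono K n).

Definition wdeg (w : 'I_n -> int) (c : expo) : int := \sum_i w i * c i ord0.

Lemma wdegD w a b : wdeg w (a + b) = wdeg w a + wdeg w b.
Proof. by rewrite /wdeg -big_split; apply: eq_bigr => i _; rewrite mxE mulrDr. Qed.

Lemma wdeg0 w : wdeg w 0 = 0.
Proof. by rewrite /wdeg big1 // => i _; rewrite mxE mulr0. Qed.

Lemma wdegMn w m j : wdeg w (m *+ j) = wdeg w m *+ j.
Proof. by elim: j => [|j IH]; rewrite ?mulr0n ?wdeg0 // !mulrS wdegD IH. Qed.

Lemma wdeg_oppw w c : wdeg (fun i => - w i) c = - wdeg w c.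
Proof. by rewrite /wdeg -sumrN; apply: eq_bigr => i _; rewrite mulNr. Qed.

Lemma exists_wdeg_inj (S : seq expo) : exists w, {in S &, injective (wdeg w)}.
Proof.
pose B := \sum_(c <- S) \sum_i `|c i ord0|.
have leB x : x \in S -> forall i, `|x i ord0| <= B.
  move=> xS i; rewrite /B (big_rem x xS) /= (bigD1 i) //= -addrA lerDl.
  by apply: addr_ge0; apply: sumr_ge0 => // y _; apply: sumr_ge0.
pose N : int := B *+ 2 + 1.
exists (fun i : 'I_n => N ^+ i) => c c' cS c'S e; apply/matrixP => i j.
rewrite (ord1 j); apply/eqP; rewrite -subr_eq0; apply/eqP.
apply: (@base_digits_eq0 N n (fun i => c i ord0 - c' i ord0)) => [l|].
  have := leB _ cS l; have := leB _ c'S l.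
  by move=> h1 h2; apply: le_lt_trans (ler_normB _ _) _; rewrite /N; lia.
by rewrite -[RHS](subrr (wdeg (fun i => N ^+ i) c)) {2}e /wdeg -sumrB;
  apply: eq_bigr => l _; rewrite mulrBr.
Qed.

Lemma exists_top_weight (S : seq expo) M0 : M0 \in S -> M0 != 0 ->
  exists w M, [/\ M \in S, 0 < wdeg w M &
                  forall c, c \in S -> c != M -> wdeg w c < wdeg w M].
Proof.
move=> M0S nM0; have [w inj] := exists_wdeg_inj (0 :: S).
pose wN i := - w i.
have injN : {in 0 :: S &, injective (wdeg wN)}.
  by move=> x y xS yS; rewrite !wdeg_oppw => /oppr_inj; exact: inj.
have [M MS HM] := @seq_argmax_inj _ _ (0 :: S) isT inj.
have [M' M'S HM'] := @seq_argmax_inj _ _ (0 :: S) isT injN.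
(* M0 != 0 lies strictly on one side of 0 for w, so 0 cannot be the top of
   0 :: S for both w and -w. *)
have [w' [T [TS nT HT]]] : exists w' T, [/\ T \in 0 :: S, T != 0 &
    forall c, c \in 0 :: S -> c != T -> wdeg w' c < wdeg w' T].
  have [eM|] := eqVneq M 0; last by exists w, M.
  have [eM'|] := eqVneq M' 0; last by exists wN, M'.
  have M0S' : M0 \in 0 :: S by rewrite inE M0S orbT.
  have := HM _ M0S'; have := HM' _ M0S'.
  rewrite eM eM' nM0 wdeg_oppw wdeg0 oppr_lt0 => /(_ isT) h1 /(_ isT) h2.
  by move: h2; rewrite wdeg0 ltNge ltW.
exists w', T; split.
- by move: TS; rewrite inE (negPf nT).
- by rewrite -(wdeg0 w'); apply: HT; rewrite ?inE ?eqxx // eq_sym.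
- by move=> c cS; apply: HT; rewrite inE cS orbT.
Qed.

Definition deg_le (w : 'I_n -> int) (f : L -> L) (t : int) :=
  forall k x, coeff x (f (mono k)) != 0 -> wdeg w (x - k) <= t.

Lemma deg_le_trans w f t t' : deg_le w f t -> t <= t' -> deg_le w f t'.
Proof. by move=> Bf le k x /Bf h; apply: le_trans le. Qed.

Lemma deg_le_ext w f h t : f =1 h -> deg_le w h t -> deg_le w f t.
Proof. by move=> e Bh k x; rewrite e; apply: Bh. Qed.

Lemma deg_le_comp w f h t1 t2 : linear f -> deg_le w f t1 -> deg_le w h t2 ->
  deg_le w (fun p => f (h p)) (t1 + t2).
Proof.
move=> lf Bf Bh k x; rewrite coeff_linear // => /sum_neq0_exists [m _].
rewrite mulf_eq0 negb_or => /andP [/Bh h1 /Bf h2].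
have -> : x - k = (x - m) + (m - k) by expo_eq.
by rewrite wdegD; apply: lerD.
Qed.

Lemma deg_le_add w f h t :
  deg_le w f t -> deg_le w h t -> deg_le w (fun p => f p + h p) t.
Proof.
move=> Bf Bh k x; rewrite coeffD.
by have [->|/Bf //] := eqVneq (coeff x (f (mono k))) 0; rewrite add0r => /Bh.
Qed.

Lemma deg_le_sub w f h t :
  deg_le w f t -> deg_le w h t -> deg_le w (fun p => f p - h p) t.
Proof.
by move=> Bf Bh; apply: deg_le_add => // k x; rewrite coeffN oppr_eq0; exact: Bh.
Qed.

Lemma deg_le_ad w g f t1 t2 : linear g -> linear f ->
  deg_le w g t1 -> deg_le w f t2 -> deg_le w (ad g f) (t1 + t2).
Proof.
move=> lg lf Bg Bf; apply: deg_le_sub; first exact: deg_le_comp.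
by rewrite addrC; exact: deg_le_comp.
Qed.

Lemma deg_le_homder w c u : deg_le w (homder c u) (wdeg w c).
Proof.
move=> k x; rewrite coeff_homder_mono.
by case: (k + c =P x) => [<- _|_]; rewrite ?mulr0 ?eqxx // addrC addKr.
Qed.

Lemma coeff_deg_gt w f t k x : deg_le w f t -> t < wdeg w (x - k) ->
  coeff x (f (mono k)) = 0.
Proof. by move=> Bf; apply: contraTeq => /Bf; rewrite -leNgt. Qed.

End WeightedDegree.

Section LeadingTerm.
Variables (K : fieldType) (n : nat).
Local Notation L := (laurent K n).
Local Notation expo := (expo n).
Local Notation mono := (@mono K n).
Variables (u : 'I_n -> K) (M : expo).

Definition ad_lead_coef (b : expo) (j : nat) : K :=
  \prod_(i < j) (dot u b + i%:R * dot u M - dot u M).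

Definition ad_lead_term (b : expo) (j : nat) : L -> L :=
  homder (b + M *+ j) (fun l => ad_lead_coef b j * u l).

Lemma ad_homder_lead_term b j :
  ad (homder M u) (ad_lead_term b j) =1 ad_lead_term b j.+1.
Proof.
move=> p; rewrite ad_homder (_ : M + (b + M *+ j) = b + M *+ j.+1); last first.
  by rewrite mulrS; expo_eq.
apply: homder_ext => l; rewrite /ad_lead_coef big_ord_recr /= dotD dotMn dotZl.
ring.
Qed.

Variables (g : L -> L) (w : 'I_n -> int).
Hypotheses (lg : linear g) (g_deg : deg_le w g (wdeg w M))
  (g_lead : deg_le w (fun p => g p - homder M u p) (wdeg w M - 1)).

Lemma iter_ad_deg_le b j :
  deg_le w (iter j (ad g) (homder b u)) (wdeg w b + wdeg w M *+ j).
Proof.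
elim: j => [|j IH] /=; first by rewrite mulr0n addr0; exact: deg_le_homder.
have := deg_le_ad lg (iter_ad_linear j lg (homder_linear b u)) g_deg IH.
by move/deg_le_trans; apply; rewrite mulrS; lia.
Qed.

Lemma iter_ad_lead_term b j :
  deg_le w (fun p => iter j (ad g) (homder b u) p - ad_lead_term b j p)
    (wdeg w b + wdeg w M *+ j - 1).
Proof.
elim: j => [|j IH].
  move=> k x /=; rewrite (_ : homder b u (mono k) - _ = 0) ?coeff0 ?eqxx //.
  rewrite /ad_lead_term mulr0n addr0 (homder_ext _ (w' := u)) ?subrr //.
  by move=> l; rewrite /ad_lead_coef big_ord0 mul1r.
have lY : linear (ad_lead_term b j) := homder_linear _ _.
have lE := linear_fun_sub (iter_ad_linear j lg (homder_linear b u)) lY.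
have lgM := linear_fun_sub lg (homder_linear M u).
apply: (deg_le_ext (h := fun p =>
    ad g (fun q => iter j (ad g) (homder b u) q - ad_lead_term b j q) p +
    ad (fun q => g q - homder M u q) (ad_lead_term b j) p)).
  move=> p; rewrite -ad_homder_lead_term /ad /= (linear_funB lg) (linear_funB lY).
  apply/eqP/freeg_eqP => x; rewrite !(coeffD, coeffB, coeffN); ring.
apply: deg_le_add.
  by apply: deg_le_trans (deg_le_ad lg lE g_deg IH) _; rewrite mulrS; lia.
have BY : deg_le w (ad_lead_term b j) (wdeg w (b + M *+ j)) by apply: deg_le_homder.
apply: deg_le_trans (deg_le_ad lgM lY g_lead BY) _.
by rewrite wdegD wdegMn mulrS; lia.
Qed.

Lemma coeff_iter_ad_top b j k :
  coeff (k + (b + M *+ j)) (iter j (ad g) (homder b u) (mono k)) =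
  ad_lead_coef b j * dot u k.
Proof.
have := coeff_deg_gt (k := k) (x := k + (b + M *+ j))
  (iter_ad_lead_term (b := b) (j := j)).
rewrite (_ : k + _ - k = b + M *+ j) ?wdegD ?wdegMn ?ltrBlDr ?ltrDl ?ltr01; last first.
  by rewrite addrC addKr.
rewrite coeffB => /(_ isT)/eqP.
by rewrite subr_eq0 coeff_homder_mono dotZl eqxx mulr1 => /eqP.
Qed.

Hypothesis M_pos : 0 < wdeg w M.

Lemma coeff_poly_ad_top (P : {poly K}) b k : P \is monic ->
  coeff (k + (b + M *+ (size P).-1)) (poly_ad P g (homder b u) (mono k)) =
  ad_lead_coef b (size P).-1 * dot u k.
Proof.
move=> mP; set r := (size P).-1.
have sP : size P = r.+1 by rewrite prednK // size_poly_gt0 monic_neq0.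
rewrite raddf_sum /=; under eq_bigr => j _ do rewrite coeffZ.
rewrite -(big_mkord xpredT (fun j => P`_j * coeff _ (iter j _ _ _))) sP.
rewrite big_nat_recr //= big1_seq ?add0r; last first.
  move=> j /andP [_]; rewrite mem_index_iota => /andP [_ jr].
  rewrite (coeff_deg_gt (iter_ad_deg_le (b := b) (j := j))) ?mulr0 //.
  rewrite (_ : k + _ - k = b + M *+ r) ?wdegD ?wdegMn; last by rewrite addrC addKr.
  by rewrite ltrD2l ltr_pMn2l.
by rewrite coeff_iter_ad_top -[P`_r]/(lead_coef P) -[r]/(size P).-1 (monicP mP) mul1r.
Qed.

End LeadingTerm.

Section LocallyFiniteDiagonal.
Variables (K : fieldType) (n : nat).
Local Notation L := (laurent K n).
Local Notation expo := (expo n).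
Local Notation mono := (@mono K n).
Hypothesis charK : [pchar K] =i pred0.

Lemma exists_generic_start (u : 'I_n -> K) (M : expo) : (exists l, u l != 0) ->
  exists b, dot u b != 0 /\ forall j : nat, dot u b + j%:R * dot u M - dot u M != 0.
Proof.
move=> [l0 nl0]; have [->|mu0] := eqVneq (dot u M) 0.
  exists (unit_expo l0); rewrite dot_unit_expo; split=> // j.
  by rewrite mulr0 addr0 subr0.
have nat_neq0 j : j.+1%:R != 0 :> K by rewrite (pcharf0P K).1.
exists (M *+ 2); rewrite dotMn; split => [|j]; first exact: mulf_neq0.
by rewrite (_ : _ - _ = j.+1%:R * dot u M) ?mulf_neq0 // -addn1 natrD; ring.
Qed.

(* The coefficients of the degree-c component x^c (w . H) of a derivation D. *)
Definition der_comp (D : L -> L) (c : expo) (l : 'I_n) : K :=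
  coeff (unit_expo l + c) (D (mono (unit_expo l))).

Lemma coeff_der_comp D k x : is_derivation D ->
  coeff x (D (mono k)) = dot (der_comp D (x - k)) k.
Proof.
by move=> dD; rewrite coeff_derivation_mono //; apply: eq_bigr => i _; rewrite mulrC.
Qed.

Lemma locally_finite_ad_diag (g : L -> L) : is_derivation g ->
  (forall c u, exists2 P : {poly K},
     P \is monic & poly_ad P g (homder c u) =1 (fun=> 0)) ->
  forall k x, x != k -> coeff x (g (mono k)) = 0.
Proof.
move=> dg loc k1 x1 nx; apply/eqP/negPn/negP => nz.
have lg := derivation_linear dg.
pose S := [seq c <- der_shifts g | [exists l, der_comp g c l != 0]].
have memS k x : coeff x (g (mono k)) != 0 -> x - k \in S.
  move=> h; rewrite mem_filter der_shiftsP // andbT.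
  move: h; rewrite coeff_der_comp // => /sum_neq0_exists [l _].
  by rewrite mulf_eq0 negb_or => /andP [h _]; apply/existsP; exists l.
have nx' : x1 - k1 != 0 by rewrite subr_eq0.
have [w [M [MS pM HM]]] := exists_top_weight (memS _ _ nz) nx'.
set u := der_comp g M.
have g_deg : deg_le w g (wdeg w M).
  move=> k x /memS xkS; have [-> //|ne] := eqVneq (x - k) M.
  exact/ltW/HM.
have g_lead : deg_le w (fun p => g p - homder M u p) (wdeg w M - 1).
  move=> k x; rewrite coeffB coeff_der_comp // coeff_homder_mono.
  rewrite -[k + M == x]eq_subl_addr [M == _]eq_sym.
  have [->|ne] := eqVneq (x - k) M; first by rewrite mulr1 subrr eqxx.
  rewrite mulr0 subr0 -coeff_der_comp // => /memS xkS.
  by have := HM _ xkS ne; lia.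
have [|b [nb Hb]] := exists_generic_start M (u := u).
  by move: MS; rewrite mem_filter => /andP [/existsP [l ?] _]; exists l.
have [P mP HP] := loc b u.
have := coeff_poly_ad_top lg g_deg g_lead pM b b mP.
rewrite HP coeff0 => /esym/eqP; rewrite mulf_eq0 (negPf nb) orbF.
by apply/negP; apply/prodf_neq0 => i _; exact: Hb.
Qed.
End LocallyFiniteDiagonal.

Section LieAlgebraWn.
Variables (K : fieldType) (n : nat).
Local Notation L := (laurent K n).
Local Notation W := (Wn K n).

Lemma derivation0 : is_derivation (fun _ : L => 0).
Proof.
split=> [a u v|u v]; first by rewrite scaler0 addr0.
apply/eqP/freeg_eqP => x; rewrite coeffD !coeff_lmulr coeff0 !big1 ?addr0 //.
all: by move=> k _; rewrite coeff0 ?mul0r ?mulr0.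
Qed.

Lemma derivation_comb a (D E : L -> L) : is_derivation D -> is_derivation E ->
  is_derivation (fun p => a *: D p + E p).
Proof.
move=> [lD dD] [lE dE]; split=> [b u v|u v].
  by rewrite lD lE; apply/eqP/freeg_eqP => x; rewrite !(coeffD, coeffZ); ring.
rewrite dD dE lmul_linearl lmul_linearr.
by apply/eqP/freeg_eqP => x; rewrite !(coeffD, coeffZ); ring.
Qed.

Lemma derivation_ad (D E : L -> L) : is_derivation D -> is_derivation E ->
  is_derivation (ad D E).
Proof.
move=> dD dE; have lD := derivation_linear dD; have lE := derivation_linear dE.
split; first exact: ad_linear.
move=> u v; rewrite /ad dE.2 dD.2 !(linear_funD lD) !(linear_funD lE) dD.2 dE.2 dD.2 dE.2.
rewrite (linear_funB (lmul_linearl v)) (linear_funB (lmul_linearr u)).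
by apply/eqP/freeg_eqP => x; rewrite !(coeffD, coeffB); ring.
Qed.

Definition zeroW : W := exist _ _ derivation0.
Definition combW a (D E : W) : W := exist _ _ (derivation_comb a (svalP D) (svalP E)).
Definition brW (D E : W) : W := exist _ _ (derivation_ad (svalP D) (svalP E)).
Definition homW c w : W := exist _ _ (homder_derivation c w).

Lemma Wn_ext (D E : W) : sval D =1 sval E -> D = E.
Proof.
move: D E => [f hf] [h hh] /= /functional_extensionality ef; subst h.
by rewrite (proof_irrelevance _ hf hh).
Qed.

Section LieMorphism.
Variable sigma : W -> W.
Hypothesis sigma_comb : forall a D E, sigma (combW a D E) = combW a (sigma D) (sigma E).
Hypothesis sigma_br : forall D E, sigma (brW D E) = brW (sigma D) (sigma E).

Lemma Lie_morph0 : sigma zeroW = zeroW.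
Proof.
have e : zeroW = combW (-1) zeroW zeroW by apply: Wn_ext => p /=; rewrite scaler0 addr0.
by apply: Wn_ext => p; rewrite {1}e sigma_comb /= scaleN1r addNr.
Qed.

Definition sumW (s : seq (K * W)) : W := foldr (fun az => combW az.1 az.2) zeroW s.

Lemma sumW_val s p : sval (sumW s) p = \sum_(az <- s) az.1 *: sval az.2 p.
Proof. by elim: s => [|az s IH] /=; rewrite ?big_nil ?big_cons ?IH. Qed.

Lemma Lie_morph_sumW s : sigma (sumW s) = sumW [seq (az.1, sigma az.2) | az <- s].
Proof. by elim: s => [|az s IH] /=; rewrite ?Lie_morph0 // sigma_comb IH. Qed.

Lemma Lie_morph_lincomb (D : W) (s : seq (K * W)) :
  (forall p, sval D p = \sum_(az <- s) az.1 *: sval az.2 p) ->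
  forall p, sval (sigma D) p = \sum_(az <- s) az.1 *: sval (sigma az.2) p.
Proof.
move=> e; have -> : D = sumW s by apply: Wn_ext => p; rewrite sumW_val e.
by move=> p; rewrite Lie_morph_sumW sumW_val big_map.
Qed.

Lemma iter_brW_val j (D E : W) p :
  sval (iter j (brW D) E) p = iter j (ad (sval D)) (sval E) p.
Proof. by elim: j p => [|j IH] p //=; rewrite /ad !IH. Qed.

Lemma Lie_morph_iter_br j D E :
  sigma (iter j (brW D) E) = iter j (brW (sigma D)) (sigma E).
Proof. by elim: j => [|j IH] //=; rewrite sigma_br IH. Qed.

Lemma Lie_morph_poly_ad P (h y : W) :
  poly_ad P (sval h) (sval y) =1 (fun=> 0) ->
  poly_ad P (sval (sigma h)) (sval (sigma y)) =1 (fun=> 0).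
Proof.
move=> e; pose s := [seq (P`_j, iter j (brW h) y) | j <- iota 0 (size P)].
have poly_adE (h' y' : W) p : poly_ad P (sval h') (sval y') p =
    \sum_(az <- [seq (P`_j, iter j (brW h') y') | j <- iota 0 (size P)])
      az.1 *: sval az.2 p.
  rewrite big_map /poly_ad.
  rewrite -(big_mkord xpredT (fun j => P`_j *: iter j (ad (sval h')) (sval y') p)).
  rewrite /index_iota subn0.
  by apply: eq_bigr => j _; rewrite iter_brW_val.
have s0 p : sval zeroW p = \sum_(az <- s) az.1 *: sval az.2 p by rewrite -poly_adE e.
move=> p; rewrite poly_adE -[RHS]/(sval zeroW p) -Lie_morph0.
rewrite (Lie_morph_lincomb s0) !big_map.
by apply: eq_bigr => j _; rewrite Lie_morph_iter_br.
Qed.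

End LieMorphism.

Lemma Lie_aut_comb (sigma : W -> W) : is_Lie_aut sigma ->
  forall a D E, sigma (combW a D E) = combW a (sigma D) (sigma E).
Proof. by move=> [_ hl _] a D E; apply: Wn_ext => p /=; apply: hl. Qed.

Lemma Lie_aut_br (sigma : W -> W) : is_Lie_aut sigma ->
  forall D E, sigma (brW D E) = brW (sigma D) (sigma E).
Proof. by move=> [_ _ hb] D E; apply: Wn_ext => p /=; apply: hb. Qed.

Lemma Lie_aut_inv (sigma sigma' : W -> W) : is_Lie_aut sigma ->
  cancel sigma sigma' -> cancel sigma' sigma -> is_Lie_aut sigma'.
Proof.
move=> H c1 c2; split; first by exists sigma.
- move=> a D E F e; have -> : F = combW a D E by apply: Wn_ext.
  by rewrite -{1}(c2 D) -{1}(c2 E) -(Lie_aut_comb H) c1.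
- move=> D E F e; have -> : F = brW D E by apply: Wn_ext.
  by rewrite -{1}(c2 D) -{1}(c2 E) -(Lie_aut_br H) c1.
Qed.

End LieAlgebraWn.

Section IntegerMatrices.
Variables (K : fieldType) (n : nat).
Hypothesis charK : [pchar K] =i pred0.
Local Notation intmx A := (map_mx (fun z : int => z%:~R : K) A).

Lemma intr_inj_char0 : injective (fun z : int => z%:~R : K).
Proof.
move=> a b /eqP; rewrite -subr_eq0 -intrB => /eqP ab; apply/eqP; rewrite -subr_eq0.
case: (a - b) ab => m; first by rewrite -pmulrn => /eqP; rewrite (pcharf0P K).1.
by rewrite NegzE intrN -pmulrn => /eqP; rewrite oppr_eq0 (pcharf0P K).1.
Qed.

Lemma intmx_of_int_inverses (B C : 'M[K]_n) (A A' : 'M[int]_n) :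
  B *m C = 1%:M -> C *m intmx A = 1%:M -> B *m intmx A' = 1%:M ->
  B = intmx A /\ A *m A' = 1%:M.
Proof.
move=> BC CA BA'.
have eB : B = intmx A by rewrite -[B]mulmx1 -CA mulmxA BC mul1mx.
split=> //; apply/matrixP => i j; apply: intr_inj_char0.
have := congr1 (fun N : 'M[K]_n => N i j) BA'.
rewrite eB !mxE rmorph_nat => /= <-; rewrite rmorph_sum.
by apply: eq_bigr => l _; rewrite !mxE rmorphM.
Qed.

End IntegerMatrices.

Section MonomialAutomorphisms.
Variables (K : fieldType) (n : nat).
Local Notation L := (laurent K n).
Local Notation Hop := (@Hop K n).

Lemma coeff_sigmaA (U V : 'M[int]_n) (p : L) x :
  V *m U = 1%:M -> U *m V = 1%:M -> coeff x (sigmaA U p) = coeff (V *m x) p.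
Proof.
move=> VU UV; rewrite raddf_sum /=.
have E m : (U *m m == x) = (m == V *m x).
  apply/eqP/eqP => [<-|->]; first by rewrite mulmxA VU mul1mx.
  by rewrite mulmxA UV mul1mx.
by under eq_bigr => m _ do rewrite coeffU E; rewrite sum_dom_coeff1.
Qed.

Lemma conjA_Hop_row (A : 'M[int]_n) i (p : L) : A \in unitmx ->
  conjA A (fun q => \sum_j (A i j)%:~R *: Hop j q) p = Hop i p.
Proof.
move=> uA; set V := invmx A.
have VA : V *m A = 1%:M by rewrite mulVmx.
have AV : A *m V = 1%:M by rewrite mulmxV.
apply/eqP/freeg_eqP => y; rewrite /conjA (coeff_sigmaA _ _ VA AV) raddf_sum /=.
under eq_bigr => j _ do
  rewrite coeffZ coeff_Hop (coeff_sigmaA _ _ AV VA) mulmxA AV mul1mx mulrCA.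
rewrite coeff_Hop -mulr_sumr; congr (_ * _).
rewrite -[y in RHS]mul1mx -AV -mulmxA mxE rmorph_sum /=.
by apply: eq_bigr => j _; rewrite rmorphM.
Qed.

End MonomialAutomorphisms.

Section LieAutomorphism.
Variables (K : fieldType) (n : nat).
Hypothesis charK : [pchar K] =i pred0.
Local Notation L := (laurent K n).
Local Notation W := (Wn K n).
Local Notation mono := (@mono K n).
Local Notation Hop := (@Hop K n).
Local Notation Hw := (@Hw K n).

Lemma Wn_neq0_coeff (z : W) :
  z <> zeroW K n -> exists k x, coeff x (sval z (mono k)) != 0.
Proof.
move=> nz; apply: NNPP => nex; apply: nz; apply: Wn_ext => p /=.
apply/eqP/freeg_eqP => x.
rewrite coeff_linear ?coeff0; last exact/derivation_linear/svalP.
apply: big1 => m _; apply/eqP; rewrite mulf_eq0; apply/orP; right.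
by apply/negPn/negP => h; apply: nex; exists m, x.
Qed.

Lemma ad_Hop_comb_eigen (B : 'M[K]_n) (lam : 'I_n -> K) (z : L -> L) k x :
  linear z -> coeff x (z (mono k)) != 0 ->
  (forall i, ad (fun p => \sum_l B i l *: Hop l p) z =1 (fun p => lam i *: z p)) ->
  forall i, \sum_l B i l * ((x - k) l ord0)%:~R = lam i.
Proof.
move=> lz nz eig i; have := congr1 (coeff x) (eig i (mono k)).
have coeff_comb (q : L) : coeff x (\sum_l B i l *: Hop l q) =
    coeff x q * \sum_l B i l * (x l ord0)%:~R.
  rewrite raddf_sum mulr_sumr.
  by apply: eq_bigr => l _; rewrite /= coeffZ coeff_Hop; ring.
have comb_mono : \sum_l B i l *: Hop l (mono k) =
    (\sum_l B i l * (k l ord0)%:~R) *: mono k.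
  by rewrite scaler_suml; apply: eq_bigr => l _; rewrite Hop_mono scalerA.
rewrite /ad coeffB coeffZ coeff_comb comb_mono (linear_funZ lz) coeffZ => /eqP.
rewrite [X in _ - X]mulrC -mulrBr mulrC -subr_eq0 -mulrBl mulf_eq0 (negPf nz) orbF.
rewrite subr_eq0 => /eqP <-.
by rewrite -sumrB; apply: eq_bigr => l _; rewrite !mxE intrD intrN mulrBr.
Qed.

Variable sigma : W -> W.
Hypothesis sigmaL : is_Lie_aut sigma.

Lemma Lie_aut_H_diag i k x : x != k -> coeff x (sval (sigma (Hw i)) (mono k)) = 0.
Proof.
have [[sigma' c1 c2] _ _] := sigmaL.
move: k x; apply: (locally_finite_ad_diag charK (svalP (sigma (Hw i)))) => c w.
have [P mP hP] := ad_Hop_locally_finite i (svalP (sigma' (homW c w))).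
exists P => //; rewrite -[homder c w]/(sval (homW c w)) -(c2 (homW c w)).
exact: (Lie_morph_poly_ad (Lie_aut_comb sigmaL) (Lie_aut_br sigmaL) (h := Hw i) hP).
Qed.

Definition Hmat : 'M[K]_n :=
  \matrix_(i, l) coeff (unit_expo l) (sval (sigma (Hw i)) (mono (unit_expo l))).

Lemma Lie_aut_H i p : sval (sigma (Hw i)) p = \sum_l Hmat i l *: Hop l p.
Proof.
have dg := svalP (sigma (Hw i)).
move: p; apply: (linear_mono_ext (h := fun q => \sum_l Hmat i l *: Hop l q)).
- exact: derivation_linear.
- by apply: linear_fun_sum_scale => l; exact: Hop_linear.
- move=> k; apply/eqP/freeg_eqP => x; rewrite raddf_sum /=.
  under eq_bigr => l _ do rewrite coeffZ Hop_mono coeffZ coeff_mono.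
  have [->|nx] := eqVneq x k; last first.
    by rewrite Lie_aut_H_diag // big1 // => l _; rewrite !mulr0.
  rewrite coeff_derivation_mono // subrr.
  by apply: eq_bigr => l _; rewrite mulr1 mxE addr0 mulrC.
Qed.

End LieAutomorphism.

Section HmatProperties.
Variables (K : fieldType) (n : nat).
Hypothesis charK : [pchar K] =i pred0.
Local Notation W := (Wn K n).
Local Notation mono := (@mono K n).
Local Notation Hw := (@Hw K n).
Variable sigma : W -> W.
Hypothesis sigmaL : is_Lie_aut sigma.

Lemma Hmat_mulmx_inv sigma' : cancel sigma sigma' -> cancel sigma' sigma ->
  Hmat sigma *m Hmat sigma' = 1%:M.
Proof.
move=> c1 c2; have sigma'L := Lie_aut_inv sigmaL c1 c2.
apply/matrixP => i q; rewrite !mxE.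
pose s := [seq (Hmat sigma i l, Hw l) | l <- index_enum 'I_n].
have sH p : sval (sigma (Hw i)) p = \sum_(az <- s) az.1 *: sval az.2 p.
  by rewrite big_map (Lie_aut_H charK sigmaL).
have := Lie_morph_lincomb (Lie_aut_comb sigma'L) sH (mono (unit_expo q)).
rewrite c1 big_map => /(congr1 (coeff (unit_expo q))) /=.
rewrite Hop_mono coeffZ coeff_mono eqxx mulr1 unit_expo_entry rmorph_nat => ->.
by rewrite raddf_sum; apply: eq_bigr => l _; rewrite /= coeffZ !mxE.
Qed.

Lemma Hmat_int_column j :
  exists c : expo n, forall i, \sum_l Hmat sigma i l * (c l ord0)%:~R = (i == j)%:R.
Proof.
have [[sigma' c1 _] _ _] := sigmaL.
have sigma0 := Lie_morph0 (Lie_aut_comb sigmaL).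
pose y : W := homW (unit_expo j) (fun l => (l == j)%:R).
have eig i : brW (Hw i) y = combW (unit_expo j i ord0)%:~R y (zeroW K n).
  by apply: Wn_ext => p; rewrite /= addr0; exact: ad_Hop_homder.
have y0 : y <> zeroW K n.
  move/(congr1 (fun D =>
    coeff (unit_expo j + unit_expo j) (sval D (mono (unit_expo j))))).
  rewrite /= coeff_homder_mono dot_unit_expo !eqxx mul1r coeff0 => /eqP.
  by rewrite oner_eq0.
have z0 : sigma y <> zeroW K n.
  by move=> e; apply: y0; rewrite -(c1 y) e -{1}sigma0 c1.
have [k [x nz]] := Wn_neq0_coeff z0.
exists (x - k) => i.
have -> : (i == j)%:R = (unit_expo j i ord0)%:~R :> K.
  by rewrite unit_expo_entry rmorph_nat.
apply: (ad_Hop_comb_eigen (lam := fun i => (unit_expo j i ord0)%:~R) _ nz) => [|i' p].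
  exact/derivation_linear/svalP.
have := congr1 (fun D => sval D p) (congr1 sigma (eig i')).
rewrite (Lie_aut_br sigmaL) (Lie_aut_comb sigmaL) sigma0 /= addr0 => <-.
by rewrite /ad !(Lie_aut_H charK sigmaL).
Qed.

Lemma Hmat_int_rinv : exists A : 'M[int]_n, Hmat sigma *m map_mx intr A = 1%:M.
Proof.
have [c hc] := fin_all_exists Hmat_int_column.
exists (\matrix_(i, j) c j i ord0); apply/matrixP => i j; rewrite !mxE -hc.
by apply: eq_bigr => l _; rewrite !mxE.
Qed.

End HmatProperties.

Theorem lemma2p10 (K : fieldType) (n : nat) (charK : [pchar K] =i pred0)
    (sigma : Wn K n -> Wn K n) :
  is_Lie_aut sigma ->
  exists A : 'M[int]_n,
    A \in unitmx /\
    (forall (i : 'I_n) (p : laurent K n),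
        sval (sigma (@Hw K n i)) p = \sum_(j < n) (A i j)%:~R *: Hop j p) /\
    (forall (i : 'I_n) (p : laurent K n),
        conjA A (sval (sigma (@Hw K n i))) p = Hop i p).
Proof.
move=> sigmaL; have [[sigma' c1 c2] _ _] := sigmaL.
have [A hA] := Hmat_int_rinv charK (Lie_aut_inv sigmaL c1 c2).
have [A' hA'] := Hmat_int_rinv charK sigmaL.
have [eB AA'] := intmx_of_int_inverses charK (Hmat_mulmx_inv charK sigmaL c1 c2) hA hA'.
have uA : A \in unitmx := (mulmx1_unit AA').1.
have sH i p : sval (sigma (@Hw K n i)) p = \sum_(j < n) (A i j)%:~R *: Hop j p.
  by rewrite (Lie_aut_H charK sigmaL) eB; apply: eq_bigr => j _; rewrite mxE.
exists A; split=> //; split=> // i p.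
by rewrite -(conjA_Hop_row i p uA) /conjA sH.
Qed.
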